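(* Let $P:\mathcal C^{op}\to\mathbf{MSLat}$ be a primary doctrine and $S\in\mathfrak I_{\mathrm{Fr}}(P)(c)$. Then $S=\exists_f\eta^P_d(x)$ for some morphism $f:d\to c$ of $\mathcal C$ and some $x\in P(d)$ (where $\exists_f$ is the left adjoint of $\mathfrak I_{\mathrm{Fr}}(P)(f)$) if and only if the object $(c,S)$ is supercompact in the site $(\mathcal C\rtimes\mathfrak I_{\mathrm{Fr}}(P),K_{\mathfrak I_{\mathrm{Fr}}(P)})$, i.e. every $K_{\mathfrak I_{\mathrm{Fr}}(P)}$-covering sieve on $(c,S)$ contains a single morphism which by itself generates a covering sieve.
   Context: $\mathbf{MSLat}$: meet-semilattices with top and finite-meet-preserving maps; a primary doctrine is $P:\mathcal C^{op}\to\mathbf{MSLat}$ with $\mathcal C$ having finite limits. For a doctrine $Q$, $\mathcal C\rtimes Q$ has objects $(c,x)$, $x\in Q(c)$, morphisms $f:(c,x)\to(d,y)$ the $f:c\to d$ with $x\le Q(f)(y)$. Free geometric completion $\mathfrak I_{\mathrm{Fr}}(P):\mathcal C^{op}\to\mathbf{Frm}$: $\mathfrak I_{\mathrm{Fr}}(P)(c)$ is the set, ordered by inclusion, of sets $S$ of pairs $(f,x)$ with $f:d\to c$ in $\mathcal C$, $x\in P(d)$, such that $(f,x)\in S$, $g:e\to d$, $y\in P(e)$, $y\le P(g)(x)$ imply $(f\circ g,y)\in S$; for $f:d\to c$, $\mathfrak I_{\mathrm{Fr}}(P)(f)(S)=\{(g,y):(f\circ g,y)\in S\}$, which has a left adjoint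 $\exists_f$ (explicitly $\exists_f(T)=\{(f\circ g,y):(g,y)\in T\}$). The unit is $\eta^P_c(x)=\{(g,y):g:e\to c,\ y\in P(e),\ y\le P(g)(x)\}$. $K_{\mathfrak I_{\mathrm{Fr}}(P)}$ is the topology on $\mathcal C\rtimes\mathfrak I_{\mathrm{Fr}}(P)$ in which $\{f_i:(c_i,U_i)\to(d,V)\}$ covers iff $V=\bigcup_i\exists_{f_i}U_i$. *)

Set Implicit Arguments.
Unset Strict Implicit.

Record Category := {
  Ob :> Type;
  Hom : Ob -> Ob -> Type;
  idm : forall a, Hom a a;
  comp : forall a b c, Hom b c -> Hom a b -> Hom a c;
  comp_id_l : forall a b (f : Hom a b), comp (idm b) f = f;
  comp_id_r : forall a b (f : Hom a b), comp f (idm a) = f;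
  comp_assoc : forall a b c d (f : Hom c d) (g : Hom b c) (h : Hom a b),
      comp f (comp g h) = comp (comp f g) h
}.
Arguments Hom {C} a b : rename.
Arguments idm {C} a : rename.
Arguments comp {C a b c} f g : rename.

Record HasFiniteLimits (C : Category) := {
  term : Ob C;
  to_term : forall a : Ob C, Hom a term;
  to_term_uniq : forall (a : Ob C) (f g : Hom a term), f = g;
  pb : forall (a b c : Ob C), Hom a c -> Hom b c -> Ob C;
  pb1 : forall a b c (f : Hom a c) (g : Hom b c), Hom (pb f g) a;
  pb2 : forall a b c (f : Hom a c) (g : Hom b c), Hom (pb f g) b;
  pb_comm : forall a b c (f : Hom a c) (g : Hom b c),
      comp f (pb1 f g) = comp g (pb2 f g);
  pb_univ : forall a b c (f : Hom a c) (g : Hom b c) x (h : Hom x a) (k : Hom x b),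
      comp f h = comp g k ->
      exists u : Hom x (pb f g),
        (comp (pb1 f g) u = h /\ comp (pb2 f g) u = k) /\
        forall v : Hom x (pb f g), comp (pb1 f g) v = h -> comp (pb2 f g) v = k -> v = u
}.

Record MSLat := {
  car :> Type;
  le : car -> car -> Prop;
  le_refl : forall x, le x x;
  le_trans : forall x y z, le x y -> le y z -> le x z;
  le_antisym : forall x y, le x y -> le y x -> x = y;
  top : car;
  le_top : forall x, le x top;
  meet : car -> car -> car;
  meet_l : forall x y, le (meet x y) x;
  meet_r : forall x y, le (meet x y) y;
  meet_glb : forall x y z, le z x -> le z y -> le z (meet x y)
}.
Arguments le {m} x y : rename.
Arguments top {m} : rename.
Arguments meet {m} x y : rename.

Record PrimaryDoctrine (C : Category) := {
  PO : Ob C -> MSLat;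
  Pmap : forall a b : Ob C, Hom a b -> PO b -> PO a;
  Pmap_top : forall a b (f : Hom a b), Pmap f top = top;
  Pmap_meet : forall a b (f : Hom a b) (x y : PO b),
      Pmap f (meet x y) = meet (Pmap f x) (Pmap f y);
  Pmap_id : forall a (x : PO a), Pmap (idm a) x = x;
  Pmap_comp : forall a b c (f : Hom a b) (g : Hom b c) (x : PO c),
      Pmap (comp g f) x = Pmap f (Pmap g x)
}.
Arguments PO {C} p a : rename.
Arguments Pmap {C} p {a b} f x : rename.

Section FreeGeometric.
Variable C : Category.
Variable P : PrimaryDoctrine C.

Definition pairs (c : Ob C) := forall d : Ob C, Hom d c -> PO P d -> Prop.

(* Elements of I_Fr(P)(c): sets of pairs that are downward closed. *)
Record IFr (c : Ob C) := {
  ideal :> pairs c;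
  ideal_closed : forall d (f : Hom d c) (x : PO P d), ideal f x ->
      forall e (g : Hom e d) (y : PO P e), le y (Pmap P g x) -> ideal (comp f g) y
}.

Definition psub c (A B : pairs c) : Prop := forall d (g : Hom d c) y, A d g y -> B d g y.
Definition peq c (A B : pairs c) : Prop := forall d (g : Hom d c) y, A d g y <-> B d g y.

Definition IFr_map d c (f : Hom d c) (S : pairs c) : pairs d :=
  fun e g y => S e (comp f g) y.
Arguments IFr_map {d c} f S e g y : rename.

Definition exists_f d c (f : Hom d c) (T : pairs d) : pairs c :=
  fun e k y => exists g : Hom e d, k = comp f g /\ T e g y.
Arguments exists_f {d c} f T e k y : rename.

Definition eta c (x : PO P c) : pairs c :=
  fun e g y => le y (Pmap P g x).
Arguments eta {c} x e g y : rename.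

(* Morphisms (e,U) -> (c,S) of C ⋊ I_Fr(P): f : e -> c with U <= I_Fr(P)(f)(S). *)
Definition is_mor e c (U : IFr e) (S : IFr c) (f : Hom e c) : Prop :=
  psub U (IFr_map f S).

Definition sieve_on c (S : IFr c) := forall e : Ob C, IFr e -> Hom e c -> Prop.

Definition is_sieve c (S : IFr c) (R : sieve_on S) : Prop :=
  (forall e (U : IFr e) (f : Hom e c), R e U f -> is_mor U S f) /\
  (forall e (U : IFr e) (f : Hom e c), R e U f ->
     forall e' (U' : IFr e') (h : Hom e' e), is_mor U' U h -> R e' U' (comp f h)).

(* K_{I_Fr(P)}-covering: S = union over f : (e,U) -> (c,S) in R of exists_f U. *)
Definition covers c (S : IFr c) (R : sieve_on S) : Prop :=
  peq S (fun d g y => exists e (U : IFr e) (f : Hom e c), R e U f /\ exists_f f (ideal U) d g y).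

Definition gen_sieve c (S : IFr c) e (U : IFr e) (f : Hom e c) : sieve_on S :=
  fun e' U' k => exists h : Hom e' e, is_mor U' U h /\ k = comp f h.

Definition supercompact c (S : IFr c) : Prop :=
  forall R : sieve_on S, is_sieve R -> covers R ->
    exists e (U : IFr e) (f : Hom e c),
      R e U f /\ covers (gen_sieve S U f).

End FreeGeometric.

Set Implicit Arguments.
Unset Strict Implicit.

(* Write f^* for I_Fr(P)(f) and E_f for its left adjoint exists_f.  Next it
   characterises coverings: a sieve whose members are morphisms covers (c,S)
   as soon as S is contained in the union of the E_f U, and the sieve
   generated by one morphism f : (e,U) -> (c,S) covers iff S <= E_f U.
   - If S = E_f eta(x), then (f, x) in S; a covering sieve R contains some
     h : (e,U) -> (c,S) with (f, x) in E_h U, and then S <= E_h U, so h alone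
     generates a covering sieve.
   - Conversely, the morphisms (e,U) -> (c,S) with U <= eta(x) <= f^* S for
     some x form a covering sieve (each (g, y) in S is reached through
     g : (d, eta y) -> (c,S)); a single member generating a covering sieve
     yields S <= E_f U <= E_f eta(x) <= S. *)

Section FreeGeometricCompletion.
Variable C : Category.
Variable P : PrimaryDoctrine C.

Lemma Pmap_mono (a b : Ob C) (h : Hom a b) (u v : PO P b) :
  le u v -> le (Pmap P h u) (Pmap P h v).
Proof.
  intros Huv.
  assert (Emeet : meet u v = u).
  { apply le_antisym; [apply meet_l | apply meet_glb; [apply le_refl | exact Huv]]. }
  rewrite <- Emeet, Pmap_meet. apply meet_r.
Qed.

Lemma psub_refl (c : Ob C) (A : pairs P c) : psub A A.
Proof. intros d g y H. exact H. Qed.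

Lemma psub_trans (c : Ob C) (A B D : pairs P c) :
  psub A B -> psub B D -> psub A D.
Proof. intros HAB HBD d g y H. exact (HBD _ _ _ (HAB _ _ _ H)). Qed.

Lemma psub_of_peq (c : Ob C) (A B : pairs P c) : peq A B -> psub A B.
Proof. intros HAB d g y. apply HAB. Qed.

Lemma psub_of_peq_r (c : Ob C) (A B : pairs P c) : peq A B -> psub B A.
Proof. intros HAB d g y. apply HAB. Qed.

Lemma peq_of_psub (c : Ob C) (A B : pairs P c) :
  psub A B -> psub B A -> peq A B.
Proof. intros HAB HBA d g y. split; [apply HAB | apply HBA]. Qed.

Lemma IFr_map_mono (d c : Ob C) (f : Hom d c) (A B : pairs P c) :
  psub A B -> psub (IFr_map f A) (IFr_map f B).
Proof. intros HAB e g y H. exact (HAB _ _ _ H). Qed.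

Lemma IFr_map_comp (e d c : Ob C) (f : Hom d c) (h : Hom e d) (A : pairs P c) :
  peq (IFr_map (comp f h) A) (IFr_map h (IFr_map f A)).
Proof.
  intros e' g y. unfold IFr_map. rewrite comp_assoc. apply iff_refl.
Qed.

Lemma IFr_map_eta (d c : Ob C) (f : Hom d c) (x : PO P c) :
  peq (IFr_map f (eta x)) (eta (Pmap P f x)).
Proof.
  intros e g y. unfold IFr_map, eta. rewrite Pmap_comp. apply iff_refl.
Qed.

Lemma exists_f_adj (d c : Ob C) (f : Hom d c) (T : pairs P d) (S : pairs P c) :
  psub T (IFr_map f S) -> psub (exists_f f T) S.
Proof.
  intros HT e k y [g [Ek Hg]]. subst k. exact (HT _ _ _ Hg).
Qed.

Lemma exists_f_mono (d c : Ob C) (f : Hom d c) (A B : pairs P d) :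
  psub A B -> psub (exists_f f A) (exists_f f B).
Proof.
  intros HAB e k y [g [Ek Hg]]. exists g. split; [exact Ek | exact (HAB _ _ _ Hg)].
Qed.

Lemma eta_refl (d : Ob C) (x : PO P d) : eta x (idm d) x.
Proof. unfold eta. rewrite Pmap_id. apply le_refl. Qed.

Lemma eta_closed (c : Ob C) (x : PO P c) :
  forall d (f : Hom d c) (z : PO P d), eta x f z ->
    forall e (g : Hom e d) (y : PO P e), le y (Pmap P g z) -> eta x (comp f g) y.
Proof.
  unfold eta; intros d f z Hz e g y Hy.
  rewrite Pmap_comp. eapply le_trans; [exact Hy | apply Pmap_mono; exact Hz].
Qed.

Definition etaI (c : Ob C) (x : PO P c) : IFr P c :=
  {| ideal := eta x; ideal_closed := @eta_closed c x |}.

(* Yoneda: eta_d(y) <= g^* S whenever (g, y) lies in S. *)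
Lemma eta_sub_of_mem (c d : Ob C) (S : IFr P c) (g : Hom d c) (y : PO P d) :
  ideal S g y -> psub (eta y) (IFr_map g S).
Proof. intros Hy e k z Hz. exact (ideal_closed Hy Hz). Qed.

Lemma exists_eta_mem (d c : Ob C) (f : Hom d c) (x : PO P d) :
  exists_f f (eta x) f x.
Proof.
  exists (idm d). split; [symmetry; apply comp_id_r | apply eta_refl].
Qed.

Lemma exists_eta_least (d c e : Ob C) (f : Hom d c) (x : PO P d)
  (h : Hom e c) (U : IFr P e) :
  exists_f h U f x -> psub (exists_f f (eta x)) (exists_f h U).
Proof.
  intros [g [Ef HUg]] d' k y [g0 [Ek Hy]]. subst k f.
  exists (comp g g0). split; [symmetry; apply comp_assoc | exact (ideal_closed HUg Hy)].
Qed.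

Lemma is_mor_id (e : Ob C) (U : IFr P e) : is_mor U U (idm e).
Proof. intros d g y H. unfold IFr_map. rewrite comp_id_l. exact H. Qed.

Lemma is_mor_comp (e' e c : Ob C) (U' : IFr P e') (U : IFr P e) (S : IFr P c)
  (h : Hom e' e) (f : Hom e c) :
  is_mor U' U h -> is_mor U S f -> is_mor U' S (comp f h).
Proof.
  intros Hh Hf. eapply psub_trans; [exact Hh |].
  eapply psub_trans; [apply IFr_map_mono; exact Hf |].
  exact (psub_of_peq_r (IFr_map_comp f h S)).
Qed.

Lemma covers_intro (c : Ob C) (S : IFr P c) (R : sieve_on S) :
  (forall e (U : IFr P e) (f : Hom e c), R e U f -> is_mor U S f) ->
  psub S (fun d g y => exists e (U : IFr P e) (f : Hom e c),
                          R e U f /\ exists_f f (ideal U) g y) ->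
  covers R.
Proof.
  intros Hmor Hsub. apply peq_of_psub; [exact Hsub |].
  intros d g y [e [U [f [HR Hg]]]]. exact (exists_f_adj (Hmor _ _ _ HR) Hg).
Qed.

Lemma gen_sieve_covers_iff (c e : Ob C) (S : IFr P c) (U : IFr P e) (f : Hom e c) :
  is_mor U S f -> (covers (gen_sieve S U f) <-> psub S (exists_f f U)).
Proof.
  intros Hf. split.
  - intros Hcov d g y Hy.
    destruct (proj1 (Hcov d g y) Hy) as [e' [U' [k [[h [Hh Ek]] [g' [Eg HU']]]]]].
    subst k g. exists (comp h g').
    split; [symmetry; apply comp_assoc | exact (Hh _ _ _ HU')].
  - intros Hsub. apply covers_intro.
    + intros e' U' k [h [Hh Ek]]. subst k. exact (is_mor_comp Hh Hf).
    + intros d g y Hy. exists e, U, f. split; [| exact (Hsub _ _ _ Hy)].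
      exists (idm e). split; [apply is_mor_id | symmetry; apply comp_id_r].
Qed.

Lemma principal_supercompact (c d : Ob C) (S : IFr P c) (f : Hom d c) (x : PO P d) :
  peq S (exists_f f (eta x)) -> supercompact S.
Proof.
  intros HS R [Hmor _] Hcov.
  assert (Hfx : ideal S f x) by exact (proj2 (HS d f x) (exists_eta_mem f x)).
  destruct (proj1 (Hcov d f x) Hfx) as [e [U [h [HRh Hh]]]].
  exists e, U, h. split; [exact HRh |].
  apply (gen_sieve_covers_iff (Hmor _ _ _ HRh)).
  eapply psub_trans; [exact (psub_of_peq HS) | exact (exists_eta_least Hh)].
Qed.

Definition principal_sieve (c : Ob C) (S : IFr P c) : sieve_on S :=
  fun e U f => is_mor U S f /\
    exists x : PO P e, psub U (eta x) /\ psub (eta x) (IFr_map f S).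

Lemma principal_sieve_is_sieve (c : Ob C) (S : IFr P c) :
  is_sieve (principal_sieve S).
Proof.
  split.
  - intros e U f [Hf _]. exact Hf.
  - intros e U f [Hf [x [HUx HxS]]] e' U' h Hh. split; [exact (is_mor_comp Hh Hf) |].
    exists (Pmap P h x). split.
    + eapply psub_trans; [exact Hh |].
      eapply psub_trans; [apply IFr_map_mono; exact HUx |].
      exact (psub_of_peq (IFr_map_eta h x)).
    + eapply psub_trans; [exact (psub_of_peq_r (IFr_map_eta h x)) |].
      eapply psub_trans; [apply IFr_map_mono; exact HxS |].
      exact (psub_of_peq_r (IFr_map_comp f h S)).
Qed.

(* Every element is covered by principal pieces: (g, y) in S is reached
   through g : (d, eta y) -> (c, S). *)
Lemma principal_sieve_covers (c : Ob C) (S : IFr P c) :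
  covers (principal_sieve S).
Proof.
  apply covers_intro; [apply principal_sieve_is_sieve |].
  intros d g y Hy. exists d, (etaI y), g.
  assert (Hsub : psub (eta y) (IFr_map g S)) by exact (eta_sub_of_mem Hy).
  split.
  - split; [exact Hsub |]. exists y. split; [apply psub_refl | exact Hsub].
  - exists (idm d). split; [symmetry; apply comp_id_r | apply eta_refl].
Qed.

Lemma supercompact_principal (c : Ob C) (S : IFr P c) :
  supercompact S ->
  exists (d : Ob C) (f : Hom d c) (x : PO P d), peq S (exists_f f (eta x)).
Proof.
  intros Hsc.
  destruct (Hsc _ (principal_sieve_is_sieve S) (principal_sieve_covers S))
    as [e [U [f [[Hf [x [HUx HxS]]] Hcov]]]].
  exists e, f, x. apply peq_of_psub.
  - eapply psub_trans; [exact (proj1 (gen_sieve_covers_iff Hf) Hcov) |].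
    exact (exists_f_mono (f:=f) HUx).
  - exact (exists_f_adj HxS).
Qed.

End FreeGeometricCompletion.

Theorem lemma7p6 (C : Category) (L : HasFiniteLimits C) (P : PrimaryDoctrine C)
  (c : Ob C) (S : IFr P c) :
  (exists (d : Ob C) (f : Hom d c) (x : PO P d),
      peq (ideal S) (exists_f f (eta x)))
  <-> supercompact S.
Proof.
  split.
  - intros [d [f [x HS]]]. exact (principal_supercompact HS).
  - apply supercompact_principal.
Qed.
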